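(* Let $n\ge1$ and $d\ge2$ be integers, $\zeta$ a primitive $d$-th root of unity and $\zeta_*$ a primitive $12d$-th root of unity with $\zeta_*^{12}=\zeta$. For every $f\in\Psi^{\#}(Y,\pi)$, \[ \zeta_*^{nd(1-d^2)}\prod_{y\in Y}\zeta_*^{-6(f(y)^2+df(y))}=\zeta^{\sum_{i=1}^n\left(k_{i-1}(f)-f(i)\right)\left(\sum_{j=1}^{i}f(j)-\sum_{j=1}^{i-1}k_{j-1}(f)\right)}. \]
   Context: $Y=\{1,2,\dots,nd+1\}$ and $\pi\colon Y\to\mathbb{N}$ is given by $\pi(k)=n$ for $1\le k\le n+1$ and $\pi(k)=\lfloor\frac{k-n-2}{d-1}\rfloor$ for $n+2\le k\le nd+1$ (so $\pi^{-1}(n)=\{1,\dots,n+1\}$ and $\pi^{-1}(i)$ has $d-1$ elements for $0\le i\le n-1$). $\Psi(Y,\pi)$ is the set of maps $f\colon Y\to\{0,1,\dots,d-1\}$ that are strictly increasing on each $\pi^{-1}(i)$, $0\le i\le n$. For $f\in\Psi(Y,\pi)$ and $0\le i\le n-1$, $k_i(f)$ is the unique element of $\{0,\dots,d-1\}\setminus f(\pi^{-1}(i))$. $\Psi^{\#}(Y,\pi)=\{f\in\Psi(Y,\pi):\sum_{y\in Y}f(y)\equiv n\binom{d}{2}\pmod d\}$. *)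

From HB Require Import structures.
From mathcomp Require Import all_boot all_order all_algebra all_field.
Set Implicit Arguments. Unset Strict Implicit. Unset Printing Implicit Defensive.
Import Order.TTheory GRing.Theory Num.Theory.

(* Y = {1,...,nd+1} is encoded by the ordinals y : 'I_(n*d).+1, the ordinal y
   standing for the element y.+1 of Y.  A map f : Y -> {0,...,d-1} is a finite
   function {ffun 'I_(n*d).+1 -> 'I_d}. *)

Definition piY (n d k : nat) : nat :=
  if k <= n.+1 then n else (k - n - 2) %/ (d - 1).

Definition mapY (n d : nat) := {ffun 'I_(n * d).+1 -> 'I_d}.

Definition fval (n d : nat) (f : mapY n d) (k : nat) : nat :=
  f (inord k.-1).

Definition inPsi (n d : nat) (f : mapY n d) : bool :=
  [forall y1 : 'I_(n * d).+1, forall y2 : 'I_(n * d).+1,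
     ((piY n d y1.+1 == piY n d y2.+1) && (y1 < y2)) ==> (f y1 < f y2)].

Definition inPsiSharp (n d : nat) (f : mapY n d) : bool :=
  inPsi f &&
  ((\sum_(y : 'I_(n * d).+1) (f y : nat)) == n * 'C(d, 2) %[mod d]).

(* k_i(f): the (unique, for f in Psi) element of {0,..,d-1} not in f(pi^{-1}(i));
   default 0 if no such element exists. *)
Definition kf (n d : nat) (f : mapY n d) (i : nat) : nat :=
  oapp (@nat_of_ord d) 0%N
    [pick j : 'I_d | [forall y : 'I_(n * d).+1,
                        (piY n d y.+1 == i) ==> (f y != j)]].

From HB Require Import structures.
From mathcomp Require Import all_boot all_order all_algebra all_field.
From mathcomp Require Import ring zify.
Set Implicit Arguments. Unset Strict Implicit. Unset Printing Implicit Defensive.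
Import Order.TTheory GRing.Theory Num.Theory.
Local Open Scope ring_scope.

(* Y is the block {1, ..., n+1} followed by the fibres pi^-1(i), i < n, each
   of d - 1 consecutive points on which f is injective and misses exactly the
   value k_i.  Hence a sum over Y of G (f y) is the sum over the first block
   plus n * (sum_{v < d} G v) minus the sum of the G (k_i), and both exponents
   become integer polynomials in f(1), ..., f(n+1), k_0, ..., k_(n-1).  For the
   exponent S of z, the telescoping identity
     2 S = sum (k_(i-1)^2 - f(i)^2) - (sum f(i) - sum k_(i-1))^2
   together with the congruence defining Psi^#, which says that d divides
   f(1) + ... + f(n+1) - k_0 - ... - k_(n-1), shows that the exponent of zs is
   12 S modulo 12 d; since zs^12 = z this is the claim. *)

Lemma sum_cross_prefix (R : comNzRingType) (a b : nat -> R) N :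
  2 * (\sum_(1 <= i < N.+1) (b i - a i) *
        (\sum_(1 <= j < i.+1) a j - \sum_(1 <= j < i) b j))
  = \sum_(1 <= i < N.+1) (b i ^+ 2 - a i ^+ 2)
    - (\sum_(1 <= i < N.+1) a i - \sum_(1 <= i < N.+1) b i) ^+ 2.
Proof.
elim: N => [|N IH]; first by rewrite !big_geq //; ring.
by rewrite !(big_nat_recr N.+1) //= mulrDr IH; ring.
Qed.

Lemma sum_ord_nat (R : comNzRingType) m :
  2 * \sum_(v < m) v%:R = m%:R * (m%:R - 1) :> R.
Proof.
elim: m => [|m IH]; first by rewrite big_ord0; ring.
by rewrite big_ord_recr /= mulrDr IH -natr1; ring.
Qed.

Lemma sum_ord_sqr_lin (R : comNzRingType) (D : R) m :
  6 * \sum_(v < m) (v%:R ^+ 2 + D * v%:R)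
  = (m%:R - 1) * m%:R * (2 * m%:R - 1) + 3 * D * m%:R * (m%:R - 1) :> R.
Proof.
elim: m => [|m IH]; first by rewrite big_ord0; ring.
by rewrite big_ord_recr /= mulrDr IH -natr1; ring.
Qed.

Lemma mul_pred_even (m : int) : exists r : int, m * (m - 1) = 2 * r.
Proof.
have [q [-> | ->]] : exists q, m = 2 * q \/ m = 2 * q + 1.
  exists (m %/ 2)%Z; have := divz_eq m 2.
  have := modz_ge0 m (isT : (2 : int) != 0).
  have := ltz_pmod m (isT : (0 : int) < 2).
  lia.
- by exists (q * (2 * q - 1)); ring.
- by exists (q * (2 * q + 1)); ring.
Qed.

(* Q = sum_(v < d) (v^2 + d v), C = sum_(v < d) v, A1, A2 (K1, K2) the sums of
   f(j), f(j)^2 for j <= n (of k_i, k_i^2), and c = f(n+1). *)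
Lemma exponent_identity (n d A1 A2 c K1 K2 Q C S m r : int) :
  6 * Q = (d - 1) * d * (2 * d - 1) + 3 * d * d * (d - 1) ->
  2 * C = d * (d - 1) ->
  2 * S = (K2 - A2) - (A1 - K1) ^+ 2 ->
  A1 + c - K1 = m * d ->
  m * (m - 1) = 2 * r ->
  n * d * (1 - d ^+ 2)
    - 6 * ((A2 + d * A1) + (c ^+ 2 + d * c) + n * Q - (K2 + d * K1))
  = 12 * S + 12 * d * (d * r - m * c - n * C).
Proof.
move=> hQ hC hS hm hr.
have -> : 12 * S + 12 * d * (d * r - m * c - n * C)
          = 6 * (2 * S) + 6 * d * d * (2 * r) - 12 * d * m * c
            - 6 * n * d * (2 * C) by ring.
have -> : n * d * (1 - d ^+ 2)
            - 6 * ((A2 + d * A1) + (c ^+ 2 + d * c) + n * Q - (K2 + d * K1))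
          = n * d * (1 - d ^+ 2) - n * (6 * Q)
            - 6 * ((A2 + d * A1) + (c ^+ 2 + d * c) - (K2 + d * K1)) by ring.
rewrite hQ hC hS -hr (_ : A1 = m * d - c + K1); last by rewrite -hm; ring.
ring.
Qed.

Lemma prod_exprz (F : fieldType) (x : F) (I : Type) (r : seq I) (e : I -> int) :
  x != 0 -> \prod_(i <- r) x ^ e i = x ^ (\sum_(i <- r) e i).
Proof.
move=> x0; apply: (big_ind2 (fun a b => a = x ^ b)) => //.
by move=> ? ? ? ? -> ->; rewrite expfzDr.
Qed.

Lemma prim_root_exprzDM (F : fieldType) N (x : F) (e q : int) :
  N.-primitive_root x -> x ^ (e + N%:Z * q) = x ^ e.
Proof.
move=> xN; have x0 : x != 0.
  by rewrite (prim_root_eq0 xN) -lt0n (prim_order_gt0 xN).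
by rewrite expfzDr // -exprz_exp -exprnP prim_expr_order // exp1rz mulr1.
Qed.

Lemma sum_shift_pred (V : zmodType) (F : nat -> V) N :
  \sum_(1 <= i < N.+1) F i.-1 = \sum_(i < N) F i.
Proof. by rewrite big_add1 big_mkord. Qed.

Lemma sum_inj_compl1 (V : zmodType) (I T : finType) (h : I -> T) (k : T)
    (G : T -> V) :
  injective h -> #|T| = #|I|.+1 -> (forall i, h i != k) ->
  \sum_(i : I) G (h i) = \sum_(v : T) G v - G k.
Proof.
move=> h_inj cardT hk; rewrite (bigD1 k) //= addrC addrK.
have imh : [set h i | i : I] =i [set~ k].
  apply/subset_cardP.
    by rewrite card_imset // cardsC1 cardT.
  by apply/subsetP => _ /imsetP [i _ ->]; rewrite in_setC1.
rewrite -[LHS](big_imset G (in2W h_inj)) /=.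
by apply: eq_bigl => v; rewrite imh in_setC1.
Qed.

Section PsiFibres.
Variables (n d : nat) (f : mapY n d).
Hypotheses (d_ge2 : (2 <= d)%N) (fPsi : inPsi f).

Lemma piY_fibre i y : (i < n)%N ->
  (piY n d y.+1 == i)
  = (i * (d - 1) + n.+1 <= y < i * (d - 1) + n.+1 + (d - 1))%N.
Proof.
move=> lt_in; rewrite /piY; case: ifP => [le_yn | /negbT gt_yn].
  rewrite (gtn_eqF lt_in); apply/esym/negbTE; rewrite negb_and -ltnNge.
  by rewrite (leq_trans le_yn) ?leq_addl.
have e_gt0 : (0 < d - 1)%N by rewrite subn_gt0.
rewrite eqn_leq leq_divRL // -ltnS ltn_divLR // mulSnr.
move: (i * (d - 1))%N (d - 1)%N e_gt0 => k e _; lia.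
Qed.

Lemma sum_fibre (V : zmodType) (G : nat -> V) i : (i < n)%N ->
  \sum_(t < d - 1) G (f (inord (t + i * (d - 1) + n.+1)))
  = \sum_(v < d) G v - G (kf f i).
Proof.
move=> lt_in; set b := (i * (d - 1) + n.+1)%N.
under eq_bigr do rewrite -addnA -/b.
have inY (t : 'I_(d - 1)) : (t + b < (n * d).+1)%N.
  by have := ltn_ord t; rewrite /b; nia.
have fib (t : 'I_(d - 1)) : piY n d (@inord (n * d) (t + b)).+1 == i.
  by rewrite inordK ?inY // piY_fibre // /b; have := ltn_ord t; lia.
pose h (t : 'I_(d - 1)) := f (inord (t + b)).
have h_inj : injective h.
  apply/inc_inj/le_mono => t1 t2 lt12.
  have /forallP/(_ (inord (t2 + b))) := forallP fPsi (inord (t1 + b)).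
  rewrite (eqP (fib t1)) (eqP (fib t2)) eqxx !inordK ?inY // ltn_add2r.
  by move=> /implyP; apply.
have [j hj] : exists j, j \notin [set h t | t : 'I_(d - 1)].
  have := cardsC [set h t | t : 'I_(d - 1)].
  rewrite card_imset // card_ord (card_ord d) => cardC.
  have /card_gt0P [j] : (0 < #|~: [set h t | t : 'I_(d - 1)]|)%N by lia.
  by rewrite inE; exists j.
have Pj : [forall y : 'I_(n * d).+1, (piY n d y.+1 == i) ==> (f y != j)].
  apply/forallP => y; apply/implyP; rewrite piY_fibre // => /andP [lo hi].
  have lt_t : (y - b < d - 1)%N by lia.
  have -> : y = inord (Ordinal lt_t + b).
    by apply: val_inj; rewrite /= subnK // inordK.
  by apply: contra hj => /eqP <-; apply/imsetP; exists (Ordinal lt_t).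
rewrite /kf; case: pickP => [k Pk | /(_ j)] /=; last by rewrite Pj.
apply: (sum_inj_compl1 (fun v : 'I_d => G v) h_inj).
  by rewrite !card_ord; lia.
by move=> t; have := forallP Pk (inord (t + b)); rewrite fib.
Qed.

Lemma sum_Y_fibres (V : zmodType) (G : nat -> V) :
  \sum_(y : 'I_(n * d).+1) G (f y)
  = \sum_(1 <= j < n.+2) G (fval f j)
    + \sum_(i < n) (\sum_(v < d) G v - G (kf f i)).
Proof.
have -> : \sum_(y : 'I_(n * d).+1) G (f y)
          = \sum_(0 <= y < n.+1 + n * (d - 1)) G (f (inord y)).
  have -> : (n.+1 + n * (d - 1) = (n * d).+1)%N by rewrite mulnBr muln1; nia.
  by rewrite big_mkord; apply: eq_bigr => y _; rewrite inord_val.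
rewrite (@big_cat_nat _ _ _ n.+1) ?leq_addr //; congr (_ + _).
  by rewrite big_add1.
rewrite (big_addn 0) addKn big_nat_mul big_mkord; apply: eq_bigr => i _.
by rewrite mulSnr (big_addn 0) addKn big_mkord sum_fibre.
Qed.

Lemma dvdz_fibre_sums :
  (\sum_(y : 'I_(n * d).+1) (f y : nat) == n * 'C(d, 2) %[mod d])%N ->
  (d%:Z %| \sum_(1 <= j < n.+2) (fval f j)%:Z - \sum_(i < n) (kf f i)%:Z)%Z.
Proof.
move=> sum_mod; have := sum_Y_fibres Posz.
rewrite sumrB sumr_const card_ord => sumY.
have sum_ord_int : \sum_(v < d) (v : nat)%:Z = 'C(d, 2)%:Z.
  by rewrite -bin2_sum big_mkord (big_morph Posz PoszD (erefl 0%:Z)).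
have -> : \sum_(1 <= j < n.+2) (fval f j)%:Z - \sum_(i < n) (kf f i)%:Z
          = (\sum_(y : 'I_(n * d).+1) (f y : nat))%:Z - (n * 'C(d, 2))%:Z.
  rewrite (big_morph Posz PoszD (erefl 0%:Z)) sumY sum_ord_int PoszM.
  by rewrite -mulr_natr natz; ring.
by rewrite -eqz_mod_dvd !modz_nat eqz_nat.
Qed.

Lemma Psi_exponent_mod :
  (\sum_(y : 'I_(n * d).+1) (f y : nat) == n * 'C(d, 2) %[mod d])%N ->
  exists q : int,
    (n * d)%:Z * (1 - d%:Z ^+ 2)
      + \sum_(y : 'I_(n * d).+1)
          - 6 * ((f y : nat)%:Z ^+ 2 + d%:Z * (f y : nat)%:Z)
    = 12 * (\sum_(1 <= i < n.+1) ((kf f i.-1)%:Z - (fval f i)%:Z) *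
             (\sum_(1 <= j < i.+1) (fval f j)%:Z
              - \sum_(1 <= j < i) (kf f j.-1)%:Z))
      + (12 * d)%:Z * q.
Proof.
move=> sum_mod; have [m hm] := dvdzP (dvdz_fibre_sums sum_mod).
have [r hr] := mul_pred_even m.
set S := \sum_(1 <= i < n.+1) _.
set A1 := \sum_(1 <= j < n.+1) (fval f j)%:Z.
set A2 := \sum_(1 <= j < n.+1) (fval f j)%:Z ^+ 2.
set K1 := \sum_(i < n) (kf f i)%:Z.
set K2 := \sum_(i < n) (kf f i)%:Z ^+ 2.
set c := (fval f n.+1)%:Z.
set Q := \sum_(v < d) ((v : nat)%:Z ^+ 2 + d%:Z * (v : nat)%:Z).
set C := \sum_(v < d) (v : nat)%:Z.
exists (d%:Z * r - m * c - n%:Z * C).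
have sumY : \sum_(y : 'I_(n * d).+1)
              - 6 * ((f y : nat)%:Z ^+ 2 + d%:Z * (f y : nat)%:Z)
    = - 6 * ((A2 + d%:Z * A1) + (c ^+ 2 + d%:Z * c) + n%:Z * Q
             - (K2 + d%:Z * K1)).
  rewrite -mulr_sumr (sum_Y_fibres (fun v => v%:Z ^+ 2 + d%:Z * v%:Z)).
  rewrite big_nat_recr //= sumrB sumr_const card_ord -/Q.
  rewrite !big_split /= -!mulr_sumr.
  by rewrite -/A1 -/A2 -/K1 -/K2 -/c; ring.
have cross : 2 * S = (K2 - A2) - (A1 - K1) ^+ 2.
  rewrite /S sum_cross_prefix sumrB.
  rewrite (sum_shift_pred (fun i => (kf f i)%:Z)).
  by rewrite (sum_shift_pred (fun i => (kf f i)%:Z ^+ 2)).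
have hQ : 6 * Q = (d%:Z - 1) * d%:Z * (2 * d%:Z - 1)
                  + 3 * d%:Z * d%:Z * (d%:Z - 1).
  by rewrite /Q; under eq_bigr do rewrite -!natz; rewrite sum_ord_sqr_lin natz.
have hC : 2 * C = d%:Z * (d%:Z - 1).
  by rewrite /C; under eq_bigr do rewrite -natz; rewrite sum_ord_nat natz.
rewrite big_nat_recr //= in hm.
by rewrite sumY !PoszM mulNr (exponent_identity n%:Z hQ hC cross hm hr).
Qed.

End PsiFibres.

Theorem mainTheorem12 (n d : nat) (hn : (1 <= n)%N) (hd : (2 <= d)%N)
  (z zs : algC) (hz : d.-primitive_root z) (hzs : (12 * d)%N.-primitive_root zs)
  (hzz : zs ^+ 12 = z) (f : mapY n d) (hf : inPsiSharp f) :
  zs ^ ((n * d)%:Z * (1 - (d%:Z) ^+ 2)) *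
    \prod_(y : 'I_(n * d).+1)
       zs ^ (- 6 * ((f y : nat)%:Z ^+ 2 + d%:Z * (f y : nat)%:Z))
  = z ^ (\sum_(1 <= i < n.+1)
           ((kf f i.-1)%:Z - (fval f i)%:Z) *
           (\sum_(1 <= j < i.+1) (fval f j)%:Z - \sum_(1 <= j < i) (kf f j.-1)%:Z)).
Proof.
have /andP [fPsi sum_mod] := hf.
have zs0 : zs != 0 by rewrite (prim_root_eq0 hzs) -lt0n (prim_order_gt0 hzs).
rewrite prod_exprz // -expfzDr //.
have [q ->] := Psi_exponent_mod hd fPsi sum_mod.
by rewrite prim_root_exprzDM // -hzz exprnP exprz_exp.
Qed.
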